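(* For all positive integers $a,b$ and every integer $k$ with $1\le k\le\min(a,b)$, there exist positions of the parallel chip-firing game on $K_{a,b}$ with period exactly $k$ and positions with period exactly $2k$.
   Context: Parallel chip-firing game: a position $\sigma$ assigns a nonnegative integer to each vertex; in each step every vertex $v$ with $\sigma(v)\ge\deg(v)$ simultaneously sends one chip to each neighbor. $K_{a,b}$ is the complete bipartite graph with sides of sizes $a$ and $b$. The period $p(\sigma)$ is the least positive integer $p$ such that $U^{t+p}\sigma=U^t\sigma$ for all sufficiently large $t$, where $U$ is the step operator. *)

From mathcomp Require Import all_boot.
Set Implicit Arguments. Unset Strict Implicit. Unset Printing Implicit Defensive.

(* Parallel chip-firing on a simple graph given by a symmetric irreflexive
   relation [e] on a finite vertex type [V]. *)
Section ChipFiring.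
Variables (V : finType) (e : rel V).

Definition deg (v : V) : nat := #|[pred u | e v u]|.

Definition position := {ffun V -> nat}.

Definition fires (s : position) (v : V) : bool := deg v <= s v.

Definition step (s : position) : position :=
  [ffun v => s v - (if fires s v then deg v else 0)
             + #|[pred u | e v u && fires s u]|].

Definition iterU (t : nat) (s : position) : position := iter t step s.

Definition eventually_periodic_with (s : position) (p : nat) : Prop :=
  exists T, forall t, T <= t -> iterU (t + p) s = iterU t s.

Definition has_period (s : position) (p : nat) : Prop :=
  0 < p /\ eventually_periodic_with s p /\
  forall q, 0 < q -> q < p -> ~ eventually_periodic_with s q.
End ChipFiring.

Definition Kab_vertex (a b : nat) : finType := ('I_a + 'I_b)%type.

Definition Kab_edge (a b : nat) : rel (Kab_vertex a b) :=
  fun x y => match x, y with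
             | inl _, inr _ => true
             | inr _, inl _ => true
             | _, _ => false
             end.

From mathcomp Require Import all_boot.
From mathcomp Require Import zify.

Set Implicit Arguments.
Unset Strict Implicit.
Unset Printing Implicit Defensive.

(* Assign to every vertex a phase in [0, p) such that the predecessor of the
   phase of each vertex is the phase of some vertex on the other side.  At
   time m, give each vertex x the position "deg x minus the number of
   neighbours that will fire strictly before x in the cycle starting at
   phase m".  Then exactly the vertices of phase m fire, and after the step
   the configuration is the one attached to phase m + 1 (mod p); so the game
   cycles with period p, and p is exact because a vertex of phase 0 fires at
   times 0 mod p only.  Periods k and 2k on K_{a,b} come from the phases
   i mod k on both sides, resp. 2 (i mod k) on the left and 2 (j mod k) + 1
   on the right. *)

Section Phases.
Variable p : nat.

Definition succ_phase (m : nat) : nat := if m.+1 == p then 0 else m.+1.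
Definition pred_phase (c : nat) : nat := if c == 0 then p.-1 else c.-1.

Definition wait (m x : nat) : nat := if m <= x then x - m else p + x - m.

Lemma pred_phase_lt c : c < p -> pred_phase c < p.
Proof. by rewrite /pred_phase; case: eqP; lia. Qed.

Lemma wait_self m : wait m m = 0.
Proof. by rewrite /wait leqnn subnn. Qed.

Lemma wait_lt m x : m < p -> x < p -> wait m x < p.
Proof. by rewrite /wait; case: ifP; lia. Qed.

Lemma wait_eq0 m x : m < p -> x < p -> (wait m x == 0) = (x == m).
Proof. by rewrite /wait => *; case: ifP => ?; apply/eqP/eqP; lia. Qed.

Lemma wait_succ_phase m x : m < p -> x < p -> x != m ->
  wait (succ_phase m) x = (wait m x).-1.
Proof.
by rewrite /wait /succ_phase => *; case: eqP => ?; rewrite ?leq0n; repeat case: ifP => ?; lia.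
Qed.

Lemma wait_succ_phase_self m : m < p -> wait (succ_phase m) m = p.-1.
Proof.
by rewrite /wait /succ_phase => *; case: eqP => ?; rewrite ?leq0n; repeat case: ifP => ?; lia.
Qed.

Lemma wait_pred_phase m c : m < p -> c < p -> c != m ->
  wait m (pred_phase c) = (wait m c).-1.
Proof.
by rewrite /wait /pred_phase => *; case: eqP => ?; rewrite ?leq0n; repeat case: ifP => ?; lia.
Qed.

Lemma succ_phase_modn t : 0 < p -> succ_phase (t %% p) = t.+1 %% p.
Proof.
move=> p_gt0; rewrite -[in RHS]addn1 -modnDml addn1 /succ_phase.
have := ltn_pmod t p_gt0; move: (t %% p) => r lt_rp.
by case: eqP => [->|ne_rp]; rewrite ?modnn // modn_small //; lia.
Qed.

Section Earlier.
Variables (X Y : finType) (px : X -> nat) (py : Y -> nat).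
Hypothesis px_lt : forall x, px x < p.
Hypothesis py_lt : forall y, py y < p.
Hypothesis pred_phase_in_Y : forall x, exists y, py y = pred_phase (px x).

Definition earlier (m : nat) (x : X) : nat :=
  #|[pred y | wait m (py y) < wait m (px x)]|.

Lemma earlier_le_card m x : earlier m x <= #|Y|.
Proof. exact: max_card. Qed.

Lemma earlier_firing m x : m < p -> px x = m -> earlier m x = 0.
Proof.
by move=> lt_mp pxm; apply: eq_card0 => y; rewrite !inE pxm wait_self.
Qed.

Lemma earlier_gt0 m x : m < p -> px x != m -> 0 < earlier m x.
Proof.
move=> lt_mp pxm; have [y pyE] := pred_phase_in_Y x.
have wx_nz : wait m (px x) != 0 by rewrite wait_eq0.
by apply/card_gt0P; exists y; rewrite !inE pyE wait_pred_phase //; lia.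
Qed.

Lemma earlier_succ_firing m x : m < p -> px x = m ->
  earlier (succ_phase m) x = #|[pred y | py y != m]|.
Proof.
move=> lt_mp pxm; apply: eq_card => y; rewrite !inE pxm wait_succ_phase_self //.
case: (eqVneq (py y) m) => [->|pym]; first by rewrite wait_succ_phase_self // ltnn.
have := wait_lt lt_mp (py_lt y); have : wait m (py y) != 0 by rewrite wait_eq0.
by rewrite wait_succ_phase //; lia.
Qed.

Lemma earlier_succ m x : m < p -> px x != m ->
  earlier m x = #|[pred y | py y == m]| + earlier (succ_phase m) x.
Proof.
move=> lt_mp pxm; have : wait m (px x) != 0 by rewrite wait_eq0.
rewrite /earlier -(cardID [pred y | py y == m]) => wx_nz; congr (_ + _).
  apply: eq_card => y; rewrite !inE.
  by case: (eqVneq (py y) m) => [->|_]; rewrite ?andbT ?andbF // wait_self lt0n.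
apply: eq_card => y; rewrite !inE (wait_succ_phase lt_mp (px_lt x) pxm).
case: (eqVneq (py y) m) => [->|pym] /=.
  by rewrite wait_succ_phase_self //; have := wait_lt lt_mp (px_lt x); lia.
have : wait m (py y) != 0 by rewrite wait_eq0.
by rewrite wait_succ_phase //; lia.
Qed.

Lemma leq_sub_earlier m x : m < p -> (#|Y| <= #|Y| - earlier m x) = (px x == m).
Proof.
move=> lt_mp; case: eqP => [pxm | /eqP pxm]; first by rewrite earlier_firing ?subn0 ?leqnn.
by have := earlier_gt0 lt_mp pxm; have := earlier_le_card m x; lia.
Qed.

Lemma sub_earlier_succ m x : m < p ->
  #|Y| - earlier m x - (if px x == m then #|Y| else 0) + #|[pred y | py y == m]|
  = #|Y| - earlier (succ_phase m) x.
Proof.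
move=> lt_mp; case: eqP => [pxm | /eqP pxm].
  rewrite earlier_firing // earlier_succ_firing // -(cardC [pred y | py y == m]).
  by rewrite subn0 subnn add0n addnK.
by have := earlier_le_card m x; rewrite (earlier_succ lt_mp pxm); lia.
Qed.

End Earlier.
End Phases.

Lemma card_sum_pred (A B : finType) (P : pred (A + B)) :
  #|P| = #|[pred x | P (inl x)]| + #|[pred y | P (inr y)]|.
Proof. by rewrite -!sum1_card (big_sumType _ (fun u => u \in P)). Qed.

Section CompleteBipartite.
Variables (a b p : nat) (pl : 'I_a -> nat) (pr : 'I_b -> nat).
Hypothesis p_gt0 : 0 < p.
Hypothesis pl_lt : forall i, pl i < p.
Hypothesis pr_lt : forall j, pr j < p.
Hypothesis pred_phase_l : forall i, exists j, pr j = pred_phase p (pl i).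
Hypothesis pred_phase_r : forall j, exists i, pl i = pred_phase p (pr j).

Local Notation E := (Kab_edge (a:=a) (b:=b)).

Definition phase_position (m : nat) : position (Kab_vertex a b) :=
  [ffun v => match v with
             | inl i => b - earlier p pl pr m i
             | inr j => a - earlier p pr pl m j
             end].

Lemma deg_inl i : deg E (inl i) = b.
Proof. by rewrite /deg card_sum_pred eq_card0 // (eq_card (B := predT)) ?card_ord. Qed.

Lemma deg_inr j : deg E (inr j) = a.
Proof.
by rewrite /deg card_sum_pred (eq_card (B := predT)) ?card_ord // eq_card0 ?addn0.
Qed.

Lemma fires_phase_inl m i : m < p -> fires E (phase_position m) (inl i) = (pl i == m).
Proof.
by move=> lt_mp; rewrite /fires deg_inl ffunE -(leq_sub_earlier pl_lt pred_phase_l) ?card_ord.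
Qed.

Lemma fires_phase_inr m j : m < p -> fires E (phase_position m) (inr j) = (pr j == m).
Proof.
by move=> lt_mp; rewrite /fires deg_inr ffunE -(leq_sub_earlier pr_lt pred_phase_r) ?card_ord.
Qed.

Lemma step_phase_position m : m < p ->
  step E (phase_position m) = phase_position (succ_phase p m).
Proof.
move=> lt_mp; apply/ffunP => -[i|j]; rewrite !ffunE card_sum_pred /=.
  rewrite fires_phase_inl // deg_inl eq_card0 // add0n.
  rewrite (eq_card (B := [pred j | pr j == m])) => [|j]; last by rewrite !inE fires_phase_inr.
  by have := sub_earlier_succ pl_lt pr_lt i lt_mp; rewrite card_ord.
rewrite fires_phase_inr // deg_inr [#|[pred: _ | false]|]eq_card0 ?addn0 //.
rewrite (eq_card (B := [pred i | pl i == m])) => [|i]; last by rewrite !inE fires_phase_inl.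
by have := sub_earlier_succ pr_lt pl_lt j lt_mp; rewrite card_ord.
Qed.

Lemma iterU_phase_position t : iterU E t (phase_position 0) = phase_position (t %% p).
Proof.
elim: t => [|t IHt]; first by rewrite mod0n.
by rewrite /iterU iterS -/(iterU E t _) IHt step_phase_position ?ltn_pmod ?succ_phase_modn.
Qed.

Lemma has_period_phase_position :
  (exists i0, pl i0 = 0) -> has_period E (phase_position 0) p.
Proof.
move=> [i0 pl_i0]; split=> //; split.
  by exists 0 => t _; rewrite !iterU_phase_position modnDr.
move=> q q_gt0 lt_qp [T periodic].
have := periodic (T * p) (leq_pmulr T p_gt0).
rewrite !iterU_phase_position modnMDl modnMl modn_small // => /(congr1 (fires E ^~ (inl i0))).
by rewrite !fires_phase_inl ?ltn_pmod // pl_i0 eqxx => /eqP q0; rewrite -q0 in q_gt0.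
Qed.

End CompleteBipartite.

Lemma exists_ord_modn k n v : k <= n -> v < k -> exists j : 'I_n, j %% k = v.
Proof.
by move=> le_kn lt_vk; exists (Ordinal (leq_trans lt_vk le_kn)); rewrite modn_small.
Qed.

Lemma pred_phase_double k r : 0 < k -> r < k ->
  pred_phase (2 * k) (2 * r) = (2 * pred_phase k r).+1.
Proof. by rewrite /pred_phase => *; do 2 case: eqP => ?; lia. Qed.

Section Periods.
Variables (a b k : nat).
Hypotheses (k_gt0 : 0 < k) (le_ka : k <= a) (le_kb : k <= b).

Local Notation E := (Kab_edge (a:=a) (b:=b)).

Lemma has_period_modn :
  has_period E (phase_position k (fun i : 'I_a => i %% k) (fun j : 'I_b => j %% k) 0) k.
Proof.
apply: has_period_phase_position => // [i|j|i|j|].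
- exact: ltn_pmod.
- exact: ltn_pmod.
- by apply: exists_ord_modn => //; apply/pred_phase_lt/ltn_pmod.
- by apply: exists_ord_modn => //; apply/pred_phase_lt/ltn_pmod.
- by exists (Ordinal (leq_trans k_gt0 le_ka)); rewrite /= mod0n.
Qed.

Lemma has_period_double_modn :
  has_period E (phase_position (2 * k) (fun i : 'I_a => 2 * (i %% k))
                                        (fun j : 'I_b => (2 * (j %% k)).+1) 0) (2 * k).
Proof.
have lt_mod (n : nat) : n %% k < k by exact: ltn_pmod.
apply: has_period_phase_position => [|i|j|i|j|]; rewrite ?muln_gt0 //.
- by have := lt_mod i; lia.
- by have := lt_mod j; lia.
- have [j jE] := exists_ord_modn le_kb (pred_phase_lt (lt_mod i)).
  by exists j; rewrite pred_phase_double // jE.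
- by have [i iE] := exists_ord_modn le_ka (lt_mod j); exists i; rewrite iE.
- by exists (Ordinal (leq_trans k_gt0 le_ka)); rewrite /= mod0n.
Qed.

End Periods.

Theorem proposition3p7 (a b : nat) (ha : 0 < a) (hb : 0 < b) (k : nat)
    (hk1 : 1 <= k) (hk2 : k <= minn a b) :
  (exists s : position (Kab_vertex a b),
      has_period (Kab_edge (a:=a) (b:=b)) s k) /\
  (exists s : position (Kab_vertex a b),
      has_period (Kab_edge (a:=a) (b:=b)) s (2 * k)).
Proof.
move: hk2; rewrite leq_min => /andP[le_ka le_kb].
by split; eexists; [exact: has_period_modn | exact: has_period_double_modn].
Qed.
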